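(* The function $f(A)=h(A)+c(A)$ on $2^V$ is non-decreasing and $\varepsilon$-approximately $\mathcal{C}$-submodular with $\varepsilon=1/L$, where $\mathcal{C}$ is the collection of all subsets $B\subseteq V$ inducing a connected subgraph; that is, for every $A\subseteq V$, every $B\in\mathcal{C}$ and every $x\in V\setminus B$, $$f(A\cup B\cup\{x\})-f(A\cup B)\le f(A\cup\{x\})-f(A)+\frac1L .$$
   Context: $G=(V,E,w)$ is a finite simple undirected graph with positive rational edge weights and no isolated vertices. $N_A(v)=N(v)\cap A$, $W_A(v)=\sum_{u\in N_A(v)}w_{(v,u)}$, $W(v)=W_V(v)$. $h(A)=\sum_{v\in V}h_A(v)$ with $h_A(v)=W(v)/2$ if $v\in A$ or $W_A(v)\ge W(v)/2$, and $h_A(v)=W_A(v)$ otherwise. $L=\max_v l(v)$, where $l(v)$ is the lcm of the denominators of the reduced fractions $W(v)/2$ and of the weights of edges incident to $v$. $p(A)$ is the number of connected components of the induced subgraph $G[A]$ ($p(\emptyset)=0$), $q(A)$ is the number of connected components of the spanning subgraph $(V,\{e\in E: e \text{ has at least one endpoint in } A\})$, and $c(A)=\frac1L\big(|V|-q(A)-p(A)\big)$. *)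

From mathcomp Require Import all_boot all_order all_algebra.
Set Implicit Arguments. Unset Strict Implicit. Unset Printing Implicit Defensive.
Import Order.TTheory GRing.Theory Num.Theory.
Local Open Scope ring_scope.

(* A finite simple undirected weighted graph on vertex type V:
   adjacency relation e (symmetric, irreflexive), weight function w
   (symmetric, positive on edges; values off edges are irrelevant),
   no isolated vertices. *)
Definition weighted_graph (V : finType) (e : rel V) (w : V -> V -> rat) : Prop :=
  [/\ forall x, ~~ e x x,
      forall x y, e x y = e y x,
      forall x y, e x y -> w x y = w y x,
      forall x y, e x y -> 0 < w x y
    & forall v, exists u, e v u].

Section Defs.
Variables (V : finType) (e : rel V) (w : V -> V -> rat).

Definition WA (A : {set V}) (v : V) : rat := \sum_(u in A | e v u) w v u.
Definition Wt (v : V) : rat := WA [set: V] v.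

Definition hA (A : {set V}) (v : V) : rat :=
  if (v \in A) || (Wt v / 2%:R <= WA A v) then Wt v / 2%:R else WA A v.
Definition h (A : {set V}) : rat := \sum_(v : V) hA A v.

Definition den (q : rat) : nat := `|denq q|%N.

Definition lv (v : V) : nat :=
  lcmn (den (Wt v / 2%:R)) (\big[lcmn/1%N]_(u | e v u) den (w v u)).
Definition LL : nat := \max_(v : V) lv v.

Definition induced (A : {set V}) : rel V :=
  fun x y => [&& x \in A, y \in A & e x y].
Definition touching (A : {set V}) : rel V :=
  fun x y => e x y && ((x \in A) || (y \in A)).

Definition p (A : {set V}) : nat :=
  #|[set [set y in A | connect (induced A) x y] | x in A]|.
Definition q (A : {set V}) : nat :=
  #|[set [set y | connect (touching A) x y] | x : V]|.

Definition c (A : {set V}) : rat :=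
  ((#|V|%:R - (q A)%:R - (p A)%:R) / (LL%:R)).

Definition f (A : {set V}) : rat := h A + c A.

Definition connected_set (B : {set V}) : bool :=
  (B != set0) && [forall x in B, forall y in B, connect (induced B) x y].

End Defs.

(* For v outside A, h_A(v) = min(W(v)/2, W_A(v)) is a concave function of the
   modular quantity W_A(v), so h is monotone and submodular.  For c, write
   qp(A) = q(A) + p(A).  Adding x to S amounts to adding a clique on its closed
   neighbourhood N[x] to the touching graph and a clique on x + N_S(x) to G[S]
   (where x was isolated), so
     qp(S + x) = qp(S) + 3 - #{touching(S)-components meeting N[x]}
                           - #{G[S]-components meeting x + N_S(x)}.
   Both counts are >= 1, and one of them is >= 2 since x has a neighbour, so qp
   is antitone.  Enlarging A to A + B only merges components, so both counts
   can only drop, except that x + N_{A+B}(x) also meets N_B(x), which lies in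
   one component because G[B] is connected: qp is supermodular up to 1, hence c
   is submodular up to 1/L. *)

From mathcomp Require Import all_boot all_order all_algebra.
From mathcomp Require Import zify lra.
Import Order.TTheory GRing.Theory Num.Theory.
Set Implicit Arguments. Unset Strict Implicit. Unset Printing Implicit Defensive.

Section Components.
Variable T : finType.
Implicit Types (r : rel T) (X Y : {set T}) (a b x y z : T).

Definition component r x := [set y | connect r x y].
Definition ncomp r := #|[set component r x | x : T]|.
Definition ncomp_meeting r X := #|[set component r x | x in X]|.
Definition add_clique r X : rel T := fun a b => r a b || (a \in X) && (b \in X).
Definition reaches r X z := [exists y in X, connect r z y].

Lemma mem_component r x : x \in component r x.
Proof. by rewrite inE connect0. Qed.

Lemma component_eq r (hs : connect_sym r) x y :
  connect r x y -> component r x = component r y.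
Proof. by move=> xy; apply/setP => z; rewrite !inE (same_connect hs xy). Qed.

Lemma ncomp_congr r1 r2 : connect r1 =2 connect r2 -> ncomp r1 = ncomp r2.
Proof.
move=> E; have E' : component r1 =1 component r2.
  by move=> x; apply/setP => y; rewrite !inE E.
by rewrite /ncomp (eq_imset _ E').
Qed.

Lemma connect_isolated r x y : (forall z, ~~ r x z) -> connect r x y -> y = x.
Proof.
move=> x_isolated /connectP [[|z s] /= xzs ->] //.
by case/andP: xzs => xz _; move: (x_isolated z); rewrite xz.
Qed.

Lemma reaches_mem r X z : z \in X -> reaches r X z.
Proof. by move=> zX; apply/existsP; exists z; rewrite zX connect0. Qed.

Lemma reaches_connect r (hs : connect_sym r) X a b :
  connect r a b -> reaches r X a = reaches r X b.
Proof.
move=> ab; apply/existsP/existsP => -[y /andP [yX ay]]; exists y; rewrite yX /=.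
- by rewrite -(same_connect hs ab).
- exact: connect_trans ab ay.
Qed.

Lemma reaches_component r (hs : connect_sym r) X a :
  reaches r X a = (component r a \in [set component r x | x in X]).
Proof.
apply/existsP/imsetP => [[y /andP [yX ay]]|[y yX Ea]].
- by exists y => //; apply: component_eq.
- exists y; rewrite yX /=.
  by move: (mem_component r y); rewrite -Ea inE.
Qed.

Lemma connect_add_clique_hub r r' X x0 (hs' : connect_sym r') :
    subrel r' (add_clique r X) -> subrel r r' -> {in X, forall u, connect r' x0 u} ->
  connect r' =2 connect (add_clique r X).
Proof.
move=> r'_sub r_sub hub a b; apply/idP/idP; apply: connect_sub => {a b} a b.
  by move/r'_sub/connect1.
case/orP => [/r_sub/connect1 //|/andP [aX bX]].
by apply: connect_trans (hub _ bX); rewrite hs'; apply: hub.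
Qed.

Section AddClique.
Variables (r : rel T) (X : {set T}).
Hypothesis hs : connect_sym r.

Lemma connect_add_clique a b :
  connect (add_clique r X) a b = connect r a b || reaches r X a && reaches r X b.
Proof.
apply/idP/idP.
- have ab_closed :
    closed (add_clique r X) [pred z | connect r a z || reaches r X a && reaches r X z].
    move=> z1 z2 /orP [z12|/andP [z1X z2X]]; rewrite !inE.
      by rewrite (same_connect_r hs (connect1 z12)) (reaches_connect hs X (connect1 z12)).
    have reach_a z : z \in X -> connect r a z -> reaches r X a.
      by move=> zX az; rewrite (reaches_connect hs X az) reaches_mem.
    rewrite (reaches_mem r z1X) (reaches_mem r z2X) !andbT.
    by apply/idP/idP => /orP [/reach_a->|->] //; rewrite orbT.
  by move/(closed_connect ab_closed); rewrite !inE connect0.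
- have sub_r u v : connect r u v -> connect (add_clique r X) u v.
    by apply: connect_sub => u' v' uv; apply: connect1; rewrite /add_clique uv.
  case/orP => [/sub_r //|/andP [/existsP [y1 /andP [y1X ay1]]]].
  case/existsP => y2 /andP [y2X by2].
  apply: connect_trans (sub_r _ _ ay1) _.
  apply: connect_trans (connect1 (_ : add_clique r X y1 y2)) _.
    by rewrite /add_clique y1X y2X orbT.
  by apply: sub_r; rewrite hs.
Qed.

Lemma component_add_clique a :
  component (add_clique r X) a =
  if reaches r X a then [set z | reaches r X z] else component r a.
Proof.
apply/setP => z; rewrite !inE connect_add_clique.
case Ha: (reaches r X a) => /=; last by rewrite orbF inE.
rewrite inE; case: (boolP (connect r a z)) => // az.
by rewrite -(reaches_connect hs X az) Ha.
Qed.

Lemma ncomp_add_clique : X != set0 ->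
  (ncomp (add_clique r X) + ncomp_meeting r X = ncomp r + 1)%N.
Proof.
case/set0Pn => x0 x0X.
set U := [set z | reaches r X z].
set Cs := [set component r x | x : T]; set CX := [set component r x | x in X].
have CX_Cs : CX \subset Cs by apply/subsetP => _ /imsetP [y _ ->]; exact: imset_f.
have compsE : [set component (add_clique r X) x | x : T] = U |: (Cs :\: CX).
  apply/setP => C; rewrite !inE; apply/imsetP/idP.
  - move=> [a _ ->]; rewrite component_add_clique; case Ha: (reaches r X a).
      by rewrite eqxx.
    by rewrite -reaches_component // Ha /=; apply/orP; right; apply/imsetP; exists a.
  - case/orP => [/eqP->|/andP [CnX /imsetP [a _ Ea]]].
      by exists x0 => //; rewrite component_add_clique reaches_mem.
    exists a => //; rewrite component_add_clique Ea.
    by move: CnX; rewrite Ea -reaches_component // => /negbTE->.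
have U_notin : U \notin Cs :\: CX.
  rewrite !inE negb_and negbK; case: (boolP (U \in CX)) => //= UnX.
  apply/imsetP => -[a _ Ea]; move: UnX.
  have : a \in U by rewrite Ea mem_component.
  by rewrite inE reaches_component // -Ea => ->.
rewrite /ncomp /ncomp_meeting compsE cardsU1 U_notin cardsD (setIidPr CX_Cs).
by have := subset_leq_card CX_Cs; rewrite -/Cs -/CX; lia.
Qed.

End AddClique.

Lemma ncomp_meeting_gt0 r X : X != set0 -> (0 < ncomp_meeting r X)%N.
Proof.
by case/set0Pn => x xX; rewrite card_gt0; apply/set0Pn; exists (component r x); apply: imset_f.
Qed.

Lemma ncomp_meeting_isolated_gt1 r X x u : x \in X -> u \in X -> u != x ->
  (forall z, ~~ r x z) -> (1 < ncomp_meeting r X)%N.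
Proof.
move=> xX uX ux x_isolated; apply/card_gt1P; exists (component r x), (component r u).
split; rewrite ?imset_f //; apply: contra ux => /eqP Exu.
have := mem_component r u; rewrite -Exu inE.
by move/(connect_isolated x_isolated)->.
Qed.

Lemma ncomp_meeting_le1 r (hs : connect_sym r) X :
  {in X &, forall y z, connect r y z} -> (ncomp_meeting r X <= 1)%N.
Proof.
move=> HX; apply/card_le1_eqP => _ _ /imsetP [y yX ->] /imsetP [z zX ->].
by rewrite (component_eq hs (HX _ _ yX zX)).
Qed.

Lemma ncomp_meetingU r X Y :
  (ncomp_meeting r (X :|: Y) <= ncomp_meeting r X + ncomp_meeting r Y)%N.
Proof. by rewrite /ncomp_meeting imsetU; apply: leq_card_setU. Qed.

(* Each r1-component lies in a single r2-component, so picking a representative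
   maps the former onto the latter. *)
Lemma ncomp_meeting_subrel r1 r2 (hs2 : connect_sym r2) X :
  subrel r1 r2 -> (ncomp_meeting r2 X <= ncomp_meeting r1 X)%N.
Proof.
move=> r12.
have c12 : subrel (connect r1) (connect r2).
  by apply: connect_sub => a b /r12/connect1.
rewrite /ncomp_meeting.
pose g C := oapp (component r2) C [pick y in X | component r1 y == C].
suff -> : [set component r2 x | x in X] =
          [set g C | C in [set component r1 x | x in X]].
  exact: leq_imset_card.
apply/setP => D; apply/imsetP/imsetP => [[y yX ->]|[_ /imsetP [y yX ->] ->]].
- exists (component r1 y); first exact: imset_f.
  rewrite /g; case: pickP => [y' /andP [_ /eqP E]|/(_ y)]; last by rewrite yX eqxx.
  apply: component_eq => //; apply: c12.
  by move: (mem_component r1 y'); rewrite E inE.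
- rewrite /g; case: pickP => [y' /andP [y'X _]|/(_ y)]; last by rewrite yX eqxx.
  by exists y'.
Qed.

End Components.

Section ComponentCounts.
Variables (V : finType) (e : rel V).
Hypotheses (e_irr : irreflexive e) (e_sym : symmetric e).
Implicit Types (S A B : {set V}) (x u : V).

Lemma connect_sym_touching S : connect_sym (touching e S).
Proof. by apply: sym_connect_sym => a b; rewrite /touching e_sym orbC. Qed.

Lemma connect_sym_induced S : connect_sym (induced e S).
Proof. by apply: sym_connect_sym => a b; rewrite /induced e_sym andbCA. Qed.

Definition closed_nbhd x := x |: [set u | e x u].
Definition closed_nbhd_in S x := x |: [set u in S | e x u].

Lemma closed_nbhd_neq0 x : closed_nbhd x != set0.
Proof. by apply/set0Pn; exists x; rewrite !inE eqxx. Qed.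

Lemma closed_nbhd_in_neq0 S x : closed_nbhd_in S x != set0.
Proof. by apply/set0Pn; exists x; rewrite !inE eqxx. Qed.

Lemma connect_touchingU1 S x :
  connect (touching e (S :|: [set x])) =2
  connect (add_clique (touching e S) (closed_nbhd x)).
Proof.
apply: (connect_add_clique_hub (connect_sym_touching _)) => [a b|a b|u].
- rewrite /add_clique /touching !inE => /andP [ab].
  case: (eqVneq a x) => [<-|_]; first by rewrite ab !orbT.
  case: (eqVneq b x) => [<-|_]; first by rewrite [e b a]e_sym ab !orbT.
  by rewrite !orbF ab => ->.
- by rewrite /touching !inE => /andP [-> /orP [->|->]]; rewrite ?orbT.
- rewrite !inE => /orP [/eqP-> //|xu].
  by apply: connect1; rewrite /touching xu !inE eqxx orbT.
Qed.

Lemma connect_inducedU1 S x :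
  connect (induced e (S :|: [set x])) =2
  connect (add_clique (induced e S) (closed_nbhd_in S x)).
Proof.
apply: (connect_add_clique_hub (connect_sym_induced _)) => [a b|a b|u].
- rewrite /add_clique /induced !inE => /and3P [aSx bSx ab].
  have aS : a != x -> a \in S by move/negbTE => xa; rewrite xa orbF in aSx.
  have bS : b != x -> b \in S by move/negbTE => xb; rewrite xb orbF in bSx.
  have [ax|xa] := eqVneq a x; have [bx|xb] := eqVneq b x.
  + by move: ab; rewrite ax bx e_irr.
  + by rewrite -ax ab bS ?orbT.
  + by rewrite -bx [e b a]e_sym ab aS ?orbT.
  + by rewrite aS ?bS ?ab.
- by rewrite /induced !inE => /and3P [-> -> ->].
- rewrite !inE => /orP [/eqP-> //|/andP [uS xu]].
  by apply: connect1; rewrite /induced !inE eqxx uS xu orbT.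
Qed.

Lemma q_setU1 S x :
  (q e (S :|: [set x]) + ncomp_meeting (touching e S) (closed_nbhd x) = q e S + 1)%N.
Proof.
rewrite -(ncomp_add_clique (connect_sym_touching S) (closed_nbhd_neq0 x)).
by congr (_ + _)%N; apply: ncomp_congr; apply: connect_touchingU1.
Qed.

Lemma component_induced_in S x : x \in S ->
  component (induced e S) x = [set y in S | connect (induced e S) x y].
Proof.
move=> xS; apply/setP => y; rewrite !inE.
case: (boolP (connect _ x y)) => [xy|]; last by rewrite andbF.
have S_closed : closed (induced e S) S by move=> a b /and3P [-> -> _].
by rewrite -(closed_connect S_closed xy) xS.
Qed.

Lemma component_induced_out S x : x \notin S -> component (induced e S) x = [set x].
Proof.
move=> xS; apply/setP => y; rewrite !inE; apply/idP/eqP => [|->]; last exact: connect0.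
by apply: connect_isolated => z; rewrite /induced (negbTE xS).
Qed.

(* Outside S the induced relation has no edges, so each such vertex is its own component. *)
Lemma ncomp_induced S : ncomp (induced e S) = (p e S + #|~: S|)%N.
Proof.
set P1 := [set [set y in S | connect (induced e S) x y] | x in S].
set P2 := [set [set x] | x in ~: S].
have compsE : [set component (induced e S) x | x : V] = P1 :|: P2.
  apply/setP => C; rewrite inE; apply/imsetP/orP => [[a _ ->]|].
    case: (boolP (a \in S)) => aS.
      by left; rewrite component_induced_in // imset_f.
    by right; rewrite component_induced_out // imset_f // inE.
  case=> /imsetP [a aS ->]; exists a => //; first by rewrite component_induced_in.
  by rewrite component_induced_out // -in_setC.
have P12 : P1 :&: P2 = set0.
  apply/setP => C; rewrite !inE; apply/negbTE/negP.
  case/andP => /imsetP [a aS ->] /imsetP [b bS Eb].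
  have : b \in [set y in S | connect (induced e S) a y] by rewrite Eb set11.
  by rewrite inE; move: bS; rewrite inE => /negbTE->.
have := cardsUI P1 P2; rewrite P12 cards0 addn0 /ncomp compsE => ->.
by rewrite (card_imset _ set1_inj).
Qed.

Lemma p_setU1 S x : x \notin S ->
  (p e (S :|: [set x]) + ncomp_meeting (induced e S) (closed_nbhd_in S x) = p e S + 2)%N.
Proof.
move=> xS; have := ncomp_add_clique (connect_sym_induced S) (closed_nbhd_in_neq0 S x).
rewrite -(ncomp_congr (connect_inducedU1 S x)) !ncomp_induced.
have := cardsC S; have := cardsC (S :|: [set x]); rewrite setUC cardsU1 xS.
lia.
Qed.

Lemma subrel_touching A S : A \subset S -> subrel (touching e A) (touching e S).
Proof.
move=> /subsetP AS a b /andP [ab aAbA]; rewrite /touching ab.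
by case/orP: aAbA => /AS->; rewrite ?orbT.
Qed.

Lemma subrel_induced A S : A \subset S -> subrel (induced e A) (induced e S).
Proof.
by move=> /subsetP AS a b /and3P [/AS aS /AS bS ab]; rewrite /induced aS bS ab.
Qed.

Definition qp S := (q e S + p e S)%N.

Lemma qp_setU1 S x : x \notin S ->
  (qp (S :|: [set x]) + ncomp_meeting (touching e S) (closed_nbhd x)
     + ncomp_meeting (induced e S) (closed_nbhd_in S x) = qp S + 3)%N.
Proof. by move=> xS; have := q_setU1 S x; have := p_setU1 xS; rewrite /qp; lia. Qed.

Lemma closed_nbhd_inU A B x :
  closed_nbhd_in (A :|: B) x = closed_nbhd_in A x :|: [set u in B | e x u].
Proof. by apply/setP => u; rewrite !inE andb_orl orbA. Qed.

(* Growing A to A :|: B can only merge components, except that x may gain the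
   neighbours it has in B, which all lie in the single component containing B. *)
Lemma qp_submod A B x : connected_set e B -> x \notin B -> x \notin A ->
  (qp (A :|: [set x]) + qp (A :|: B) <= qp (A :|: B :|: [set x]) + qp A + 1)%N.
Proof.
move=> /andP [_ /forall_inP B_conn] xB xA.
have xAB : x \notin A :|: B by rewrite inE negb_or xA xB.
have := qp_setU1 xA; have := qp_setU1 xAB.
have := ncomp_meeting_subrel (connect_sym_touching _) (closed_nbhd x)
          (subrel_touching (subsetUl A B)).
have := ncomp_meeting_subrel (connect_sym_induced _) (closed_nbhd_in A x)
          (subrel_induced (subsetUl A B)).
have : (ncomp_meeting (induced e (A :|: B)) [set u in B | e x u] <= 1)%N.
  apply: (ncomp_meeting_le1 (connect_sym_induced _)) => y z.
  rewrite !inE => /andP [yB _] /andP [zB _].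
  apply: connect_sub (forall_inP (B_conn y yB) z zB) => a b ab.
  exact/connect1/(subrel_induced (subsetUr A B)).
have := ncomp_meetingU (induced e (A :|: B)) (closed_nbhd_in A x) [set u in B | e x u].
rewrite -closed_nbhd_inU; lia.
Qed.

Section NoIsolatedVertex.
Hypothesis e_nonisolated : forall x, exists u, e x u.

(* If x has a neighbour u in S, then x, isolated in G[S], and u are in different
   components of G[S]; otherwise x is isolated in the touching graph of S. *)
Lemma qp_setU1_le S x : x \notin S -> (qp (S :|: [set x]) <= qp S)%N.
Proof.
move=> xS; have := qp_setU1 xS.
have nbr_neq u : e x u -> u != x by apply: contraTneq => ->; rewrite e_irr.
have := ncomp_meeting_gt0 (touching e S) (closed_nbhd_neq0 x).
have := ncomp_meeting_gt0 (induced e S) (closed_nbhd_in_neq0 S x).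
case: (boolP [exists u, (u \in S) && e x u]) => [/existsP [u /andP [uS xu]]|no_nbr].
  suff : (1 < ncomp_meeting (induced e S) (closed_nbhd_in S x))%N by lia.
  apply: (@ncomp_meeting_isolated_gt1 _ _ _ x u);
    rewrite ?nbr_neq // ?inE ?eqxx ?uS ?xu ?orbT //.
  by move=> z; rewrite /induced (negbTE xS).
have [u xu] := e_nonisolated x.
suff : (1 < ncomp_meeting (touching e S) (closed_nbhd x))%N by lia.
apply: (@ncomp_meeting_isolated_gt1 _ _ _ x u);
  rewrite ?nbr_neq // ?inE ?eqxx ?xu ?orbT //.
move=> z; rewrite /touching (negbTE xS) /=; apply: contra no_nbr => /andP [xz zS].
by apply/existsP; exists z; rewrite zS xz.
Qed.

Lemma qp_mono A B : A \subset B -> (qp B <= qp A)%N.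
Proof.
move Hn : #|B :\: A| => n; elim: n A Hn => [|n IH] A Hn AB.
  suff -> : B = A by [].
  by apply/eqP; rewrite eqEsubset AB andbT -setD_eq0 -cards_eq0 Hn.
have [x] : exists x, x \in B :\: A by apply/set0Pn; rewrite -cards_eq0 Hn.
rewrite inE => /andP [xA xB].
apply: leq_trans (qp_setU1_le xA); apply: IH; last by rewrite subUset AB sub1set.
by move: Hn; rewrite -setDDl (cardsD1 x (B :\: A)) !inE xA xB => -[].
Qed.

End NoIsolatedVertex.

End ComponentCounts.

Local Open Scope ring_scope.

Lemma min_increment_antitone (R : realDomainType) (m a s d : R) : a <= s -> 0 <= d ->
  Num.min m (s + d) - Num.min m s <= Num.min m (a + d) - Num.min m a.
Proof. by move=> as_ d0; rewrite !minEle; do !case: ifP; lra. Qed.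

Section Coverage.
Variables (V : finType) (e : rel V) (w : V -> V -> rat).
Hypothesis w_ge0 : forall x y, e x y -> 0 <= w x y.
Implicit Types (S T A : {set V}) (x v : V).

Lemma WA_mono S T v : S \subset T -> WA e w S v <= WA e w T v.
Proof.
move=> /subsetP ST; rewrite /WA big_mkcond [X in _ <= X]big_mkcond /=.
apply: ler_sum => u _.
case: (boolP (u \in S)) => [/ST-> //|_].
by case: ifP => // /andP [_ /w_ge0].
Qed.

Lemma WA_setU1 S x v : x \notin S ->
  WA e w (S :|: [set x]) v = WA e w S v + (if e v x then w v x else 0).
Proof. by move=> xS; rewrite /WA !big_mkcondr /= setUC big_setU1 //= addrC. Qed.

Lemma hA_in S v : v \in S -> hA e w S v = Wt e w v / 2%:R.
Proof. by rewrite /hA => ->. Qed.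

Lemma hA_notin S v : v \notin S -> hA e w S v = Num.min (Wt e w v / 2%:R) (WA e w S v).
Proof. by rewrite /hA minEle => /negbTE->. Qed.

Lemma hA_le S v : hA e w S v <= Wt e w v / 2%:R.
Proof.
by case: (boolP (v \in S)) => vS; [rewrite hA_in | rewrite hA_notin // ge_min lexx].
Qed.

Lemma hA_mono S T v : S \subset T -> hA e w S v <= hA e w T v.
Proof.
move=> ST; case: (boolP (v \in T)) => vT; first by rewrite (hA_in vT) hA_le.
have vS : v \notin S by apply: contra vT; apply: (subsetP ST).
by rewrite !hA_notin // le_min !ge_min lexx WA_mono ?orbT.
Qed.

Lemma hA_submod A S x v : A \subset S -> x \notin S ->
  hA e w (S :|: [set x]) v - hA e w S v <= hA e w (A :|: [set x]) v - hA e w A v.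
Proof.
move=> AS xS; have xA : x \notin A by apply: contra xS; apply: (subsetP AS).
have x_inU T : x \in T :|: [set x] by rewrite inE set11 orbT.
have [->|vx] := eqVneq v x.
  by rewrite !(hA_in (x_inU _)) lerD2l lerN2 hA_mono.
case: (boolP (v \in S)) => vS.
  have vSx : v \in S :|: [set x] by rewrite inE vS.
  by rewrite (hA_in vS) (hA_in vSx) subrr subr_ge0 hA_mono ?subsetUl.
have vA : v \notin A by apply: contra vS; apply: (subsetP AS).
rewrite !hA_notin ?inE ?negb_or ?vS ?vA ?vx // !WA_setU1 //.
apply: min_increment_antitone; first exact: WA_mono.
by case: ifP => // /w_ge0.
Qed.

Lemma h_mono A S : A \subset S -> h e w A <= h e w S.
Proof. by move=> AS; apply: ler_sum => v _; apply: hA_mono. Qed.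

Lemma h_submod A S x : A \subset S -> x \notin S ->
  h e w (S :|: [set x]) - h e w S <= h e w (A :|: [set x]) - h e w A.
Proof. by move=> AS xS; rewrite /h -!sumrB; apply: ler_sum => v _; apply: hA_submod. Qed.

End Coverage.

Section Objective.
Variables (V : finType) (e : rel V) (w : V -> V -> rat).
Hypothesis hg : weighted_graph e w.
Implicit Types (A B S : {set V}) (x : V).

Let e_irr : irreflexive e. Proof. by case: hg => H _ _ _ _ x; apply/negbTE. Qed.
Let e_sym : symmetric e. Proof. by case: hg. Qed.
Let w_ge0 x y : e x y -> 0 <= w x y. Proof. by case: hg => _ _ _ H _ /H/ltW. Qed.
Let e_nonisolated x : exists u, e x u. Proof. by case: hg. Qed.

Lemma cE S : c e w S = (#|V|%:R - (qp e S)%:R) / (LL e w)%:R.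
Proof. by rewrite /c /qp natrD opprD addrA. Qed.

Lemma c_mono A B : A \subset B -> c e w A <= c e w B.
Proof.
move=> AB; rewrite !cE ler_wpM2r ?invr_ge0 ?ler0n // lerD2l lerN2 ler_nat.
exact: qp_mono.
Qed.

Lemma c_submod A B x : connected_set e B -> x \notin B -> x \notin A ->
  c e w (A :|: B :|: [set x]) - c e w (A :|: B)
    <= c e w (A :|: [set x]) - c e w A + 1 / (LL e w)%:R.
Proof.
move=> B_conn xB xA.
have qp_le : (qp e (A :|: [set x]))%:R + (qp e (A :|: B))%:R
             <= (qp e (A :|: B :|: [set x]))%:R + (qp e A)%:R + 1 :> rat.
  by rewrite -!natrD natr1 ler_nat -addn1; apply: qp_submod.
rewrite !cE div1r; set ell := (LL e w)%:R^-1.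
have : 0 <= ((qp e (A :|: B :|: [set x]))%:R + (qp e A)%:R + 1
              - (qp e (A :|: [set x]))%:R - (qp e (A :|: B))%:R) * ell.
  by rewrite mulr_ge0 ?invr_ge0 ?ler0n //; lra.
lra.
Qed.

Lemma f_mono A B : A \subset B -> f e w A <= f e w B.
Proof. by move=> AB; rewrite lerD ?h_mono ?c_mono. Qed.

Lemma f_submod A B x : connected_set e B -> x \notin B ->
  f e w (A :|: B :|: [set x]) - f e w (A :|: B)
    <= f e w (A :|: [set x]) - f e w A + 1 / (LL e w)%:R.
Proof.
move=> B_conn xB; case: (boolP (x \in A)) => xA.
  have xAB : x \in A :|: B by rewrite inE xA.
  rewrite !(setUidPl _ : _ :|: [set x] = _) ?sub1set //.
  by rewrite !subrr add0r div1r invr_ge0 ler0n.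
have xAB : x \notin A :|: B by rewrite inE negb_or xA xB.
have := h_submod w_ge0 (subsetUl A B) xAB.
have := c_submod B_conn xB xA.
rewrite /f; lra.
Qed.

End Objective.

Theorem mainTheorem18 (V : finType) (e : rel V) (w : V -> V -> rat) :
  weighted_graph e w ->
  (forall A B : {set V}, A \subset B -> f e w A <= f e w B) /\
  (forall (A B : {set V}) (x : V), connected_set e B -> x \notin B ->
     f e w (A :|: B :|: [set x]) - f e w (A :|: B)
       <= f e w (A :|: [set x]) - f e w A + 1 / (LL e w)%:R).
Proof. by move=> hg; split; [exact: f_mono | exact: f_submod]. Qed.
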